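(* Let $n\geq1$ and $0\leq p\leq 1$. Then: (i) for $1<k<n$, $$\Pr_p(PCE_k)=\sum_{r=k}^n\binom{r}{k}(-1)^{r-k}\binom{n}{r}2^r\bigl(p^{2^n-2^{n-r}}-p^{2^n}\bigr),\quad \Pr_p(NCE_k)=\sum_{r=k}^n\binom{r}{k}(-1)^{r-k}\binom{n}{r}2^r\bigl((1-p)^{2^n-2^{n-r}}-(1-p)^{2^n}\bigr);$$ (ii) if $n>1$, $$\Pr_p(PCE_n)=2^n\bigl(p^{2^n-1}-p^{2^n}\bigr)+p^{2^n},\qquad \Pr_p(NCE_n)=2^n\bigl((1-p)^{2^n-1}-(1-p)^{2^n}\bigr)+(1-p)^{2^n};$$ (iii) if $1<n$, $$\Pr_p(PCE_1)=2n\bigl(p^{2^{n-1}}-p^{2^n}-p^{2^{n-1}}(1-p)^{2^{n-1}}\bigr)+\sum_{r=2}^n r(-1)^{r-1}\binom{n}{r}2^r\bigl(p^{2^n-2^{n-r}}-p^{2^n}\bigr),$$ $$\Pr_p(NCE_1)=2n\bigl((1-p)^{2^{n-1}}-(1-p)^{2^n}-p^{2^{n-1}}(1-p)^{2^{n-1}}\bigr)+\sum_{r=2}^n r(-1)^{r-1}\binom{n}{r}2^r\bigl((1-p)^{2^n-2^{n-r}}-(1-p)^{2^n}\bigr).$$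
   Context: Boolean functions on $n$ variables are maps $f:\{0,1\}^n\to\{0,1\}$, variables indexed by $[n]=\{0,\dots,n-1\}$. The bias-$p$ probability measure on Boolean functions is $\Pr_p(f)=p^{|f^{-1}\{1\}|}(1-p)^{|f^{-1}\{0\}|}$ (with $0^0=1$). $f$ is positively canalizing for variable $i$ if there is $s\in\{0,1\}$ with $f(x)=1$ for all $x$ with $x_i=s$; negatively canalizing for variable $i$ if there is $s\in\{0,1\}$ with $f(x)=0$ for all $x$ with $x_i=s$. $f$ is positively (resp. negatively) canalizing if it is so for some variable. $PCE_k$ is the set of Boolean functions that are positively but not negatively canalizing and are positively canalizing for exactly $k$ variables; $NCE_k$ is the set of Boolean functions that are negatively but not positively canalizing and are negatively canalizing for exactly $k$ variables. *)

From mathcomp Require Import all_boot all_order all_algebra.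
Set Implicit Arguments. Unset Strict Implicit. Unset Printing Implicit Defensive.
Import Order.TTheory GRing.Theory Num.Theory.

Definition input (n : nat) := {ffun 'I_n -> bool}.
Definition boolfun (n : nat) := {ffun input n -> bool}.

Definition pos_can_var n (f : boolfun n) (i : 'I_n) : bool :=
  [exists s : bool, [forall x : input n, (x i == s) ==> f x]].
Definition neg_can_var n (f : boolfun n) (i : 'I_n) : bool :=
  [exists s : bool, [forall x : input n, (x i == s) ==> ~~ f x]].

Definition pos_can n (f : boolfun n) : bool := [exists i, pos_can_var f i].
Definition neg_can n (f : boolfun n) : bool := [exists i, neg_can_var f i].

Definition PCE (n k : nat) : {set boolfun n} :=
  [set f | [&& pos_can f, ~~ neg_can f & #|[set i | pos_can_var f i]| == k]].
Definition NCE (n k : nat) : {set boolfun n} :=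
  [set f | [&& neg_can f, ~~ pos_can f & #|[set i | neg_can_var f i]| == k]].

Local Open Scope ring_scope.

(* bias-p probability of a set of Boolean functions (x ^+ 0 = 1, so 0^0 = 1) *)
Definition Prp (R : nzRingType) (n : nat) (p : R) (A : {set boolfun n}) : R :=
  \sum_(f in A) p ^+ #|[set x | f x]| * (1 - p) ^+ #|[set x | ~~ f x]|.

From mathcomp Require Import all_boot all_order all_algebra.
From mathcomp Require Import ring zify.
Import Order.TTheory GRing.Theory Num.Theory.
Set Implicit Arguments.
Unset Strict Implicit.
Unset Printing Implicit Defensive.
Local Open Scope ring_scope.

(* A Boolean function other than the constant 1 can be positively canalizing in
   a variable i for at most one value s_i: that of a half-cube {x | x_i = s_i}
   on which it is 1.  So, for a set U of variables, the functions positively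
   canalizing in every i in U are the constant 1, counted 2^|U| times, plus the
   functions that are 1 on the union of the half-cubes {x_i = s_i}, i in U, for
   exactly one choice s.  That union has 2^n - 2^(n-|U|) points, and the
   functions that are 1 on a set A have total weight p^|A|; double counting
   the pairs (f, s) gives the weight of these functions.  Inclusion-exclusion
   over U, i.e. sum_r C(m,r) C(r,k) (-1)^(r-k) = [m = k], then gives the weight
   of the functions with exactly k positively canalizing variables.  The
   functions that are also negatively canalizing are the 2n literals x_i and
   ~x_i, which have one canalizing variable each: they only correct the case
   k = 1.  Negation exchanges PCE_k with NCE_k and p with 1 - p.  The identities
   are polynomial in p. *)

Lemma mul_bin_nested m r k : (k <= r)%N -> (r <= m)%N ->
  ('C(m, r) * 'C(r, k) = 'C(m, k) * 'C(m - k, r - k))%N.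
Proof.
move=> le_kr le_rm; have le_km := leq_trans le_kr le_rm.
apply/eqP; rewrite -(@eqn_pmul2r (k`! * (r - k)`! * (m - r)`!)) ?muln_gt0 ?fact_gt0 //.
have := bin_fact (leq_sub2r k le_rm); rewrite (_ : m - k - (r - k) = m - r)%N; last by lia.
move=> fact_mk; apply/eqP.
transitivity ('C(m, r) * ('C(r, k) * (k`! * (r - k)`!)) * (m - r)`!)%N; first by ring.
rewrite bin_fact // -mulnA bin_fact //.
transitivity ('C(m, k) * (k`! * ('C(m - k, r - k) * ((r - k)`! * (m - r)`!))))%N; last by ring.
by rewrite fact_mk bin_fact.
Qed.

Section BinomialSums.
Variable R : pzRingType.

Lemma sum_bin_sign m : \sum_(j < m.+1) 'C(m, j)%:R * (-1) ^+ j = (m == 0)%N%:R :> R.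
Proof.
have := exprDn_comm m (esym (commr1 (-1 : R))); rewrite subrr expr0n => ->.
by apply: eq_bigr => j _; rewrite expr1n mul1r mulr_natl.
Qed.

Lemma sum_bin_bin_sign m k :
  \sum_(r < m.+1) 'C(m, r)%:R * ('C(r, k)%:R * (-1) ^+ (r - k)) = (m == k)%:R :> R.
Proof.
have [lt_mk | le_km] := ltnP m k.
  rewrite ltn_eqF // big1 // => r _.
  by rewrite [in 'C(r, k)]bin_small ?mul0r ?mulr0 // (leq_ltn_trans _ lt_mk) // -ltnS.
rewrite -(big_mkord xpredT (fun r => 'C(m, r)%:R * ('C(r, k)%:R * (-1) ^+ (r - k)) : R)).
rewrite (@big_cat_nat _ _ _ k) ?leqW //= big_nat big1 ?add0r; last first.
  by move=> r /andP[_ lt_rk]; rewrite [in 'C(r, k)]bin_small ?mul0r ?mulr0.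
rewrite -{1}[k]add0n big_addn subSn // big_mkord.
rewrite (eq_bigr (fun j : 'I__ => 'C(m, k)%:R * ('C(m - k, j)%:R * (-1) ^+ j))) => [|j _].
  rewrite -mulr_sumr sum_bin_sign; have [-> | ne_mk] := eqVneq m k.
    by rewrite subnn binn mulr1.
  by rewrite subn_eq0 leqNgt ltn_neqAle eq_sym ne_mk le_km mulr0.
have le_jkm : (j + k <= m)%N by have := ltn_ord j; lia.
by rewrite mulrA -natrM mul_bin_nested ?leq_addl // !addnK natrM -mulrA.
Qed.

Lemma sum_subsets_by_card (T : finType) (A : {set T}) (h : nat -> R) :
  \sum_(U : {set T} | U \subset A) h #|U| = \sum_(r < #|A|.+1) 'C(#|A|, r)%:R * h r.
Proof.
rewrite (partition_big (fun U : {set T} => inord #|U| : 'I_#|A|.+1) xpredT) //=.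
apply: eq_bigr => r _; rewrite mulr_natl -cards_draws -sumr_const.
apply: eq_big => [U | U /andP[sUA /eqP <-]]; last first.
  by rewrite inordK // ltnS subset_leq_card.
rewrite inE; case sUA: (U \subset A) => //=.
have ltU : (#|U| < #|A|.+1)%N by rewrite ltnS subset_leq_card.
apply/eqP/eqP => [<- | eU]; first by rewrite inordK.
by apply: val_inj; rewrite /= inordK eU.
Qed.

End BinomialSums.

Lemma existsb_bool (Q : pred bool) : [exists b, Q b] = Q true || Q false.
Proof.
by apply/existsP/orP => [[[] Qb] | [Qb | Qb]]; [left | right | exists true | exists false].
Qed.

Section Weights.
Variables (R : comNzRingType) (n : nat).
Implicit Types (p : R) (f : boolfun n) (x : input n) (U : {set 'I_n}).

Definition weight p f : R := \prod_x (if f x then p else 1 - p).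
Definition true_set f : {set input n} := [set x | f x].
Definition halfcube (i : 'I_n) (b : bool) : {set input n} := [set x : input n | x i == b].
Definition const_true : boolfun n := [ffun=> true].

Lemma weightE p f :
  weight p f = p ^+ #|[set x | f x]| * (1 - p) ^+ #|[set x | ~~ f x]|.
Proof.
rewrite /weight (bigID f) /= -!prodr_const.
by congr (_ * _); apply: eq_big => x; rewrite ?inE //; case: (f x).
Qed.

Lemma PrpE p (A : {set boolfun n}) : Prp p A = \sum_(f in A) weight p f.
Proof. by apply: eq_bigr => f _; rewrite weightE. Qed.

Lemma card_input : #|{: input n}| = (2 ^ n)%N.
Proof. by rewrite card_ffun card_bool card_ord. Qed.

Lemma weight_const_true p : weight p const_true = p ^+ (2 ^ n).
Proof.
by rewrite -card_input -prodr_const; apply: eq_bigr => x _; rewrite ffunE.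
Qed.

Lemma sum_weight_true_on p (A : {set input n}) :
  \sum_(f | A \subset true_set f) weight p f = p ^+ #|A|.
Proof.
(* p ^+ #|A| = \prod_x (p + [x \notin A] (1 - p)), expanded as a sum over all f. *)
pose F x (b : bool) : R := if b then p else if x \in A then 0 else 1 - p.
have -> : p ^+ #|A| = \prod_x \sum_(b : bool) F x b.
  rewrite (bigID (mem A)) /= [X in _ * X]big1 ?mulr1 => [|x /negbTE xA].
    by rewrite -prodr_const; apply: eq_bigr => x xA; rewrite big_bool /F /= xA addr0.
  by rewrite big_bool /F /= xA subrKC.
rewrite bigA_distr_bigA big_mkcond; apply: eq_bigr => f _; rewrite /weight.
have [/subsetP sAf | /subsetPn [x xA nfx]] := boolP (A \subset true_set f).
  apply: eq_bigr => x _; rewrite /F; case fx: (f x) => //.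
  by rewrite ifN //; apply: contraFN fx => /sAf; rewrite inE.
by move: nfx; rewrite inE => /negbTE fx; rewrite (bigD1 x) //= /F fx xA mul0r.
Qed.

Lemma card_agree U (t : 'I_n -> bool) :
  #|[set x : input n | [forall i in U, x i == t i]]| = (2 ^ (n - #|U|))%N.
Proof.
pose F i : pred bool := if i \in U then pred1 (t i) else predT.
rewrite (eq_card (B := family F)) => [|x]; last first.
  rewrite inE; apply/forall_inP/familyP => [agree i | inF i iU].
    by rewrite /F; case: ifP => // /agree.
  by have := inF i; rewrite /F iU.
rewrite card_family foldrE big_map big_enum /= (bigID (mem U)) /= big1 => [|i iU].
  rewrite mul1n (eq_bigr (fun=> 2%N)) => [|i /negbTE niU].
    have -> : (n - #|U| = #|~: U|)%N by have := cardsC U; rewrite card_ord; lia.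
    by rewrite prod_nat_const; congr (2 ^ _)%N; apply: eq_card => i; rewrite inE.
  by rewrite /F niU -card_bool; apply: eq_card.
by rewrite /F iU card1.
Qed.

Definition pos_vars f : {set 'I_n} := [set i | pos_can_var f i].
Definition union_halfcubes U (s : 'I_n -> bool) : {set input n} :=
  \bigcup_(i in U) halfcube i (s i).

Lemma card_union_halfcubes U (s : 'I_n -> bool) :
  #|union_halfcubes U s| = (2 ^ n - 2 ^ (n - #|U|))%N.
Proof.
have cmpl : ~: union_halfcubes U s = [set x : input n | [forall i in U, x i == ~~ s i]].
  apply/setP => x; rewrite in_setC inE.
  apply/negP/forall_inP => [disj i iU | agree /bigcupP [i iU]].
    case: (boolP (x i == s i)) => [xi | ]; last by case: (x i); case: (s i).
    by case: disj; apply/bigcupP; exists i; rewrite ?inE.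
  by rewrite inE (eqP (agree i iU)); case: (s i).
have := cardsC (union_halfcubes U s); rewrite cmpl card_agree card_input => <-.
by rewrite addnK.
Qed.

Lemma pos_can_varE f i : pos_can_var f i = [exists b, halfcube i b \subset true_set f].
Proof.
apply: eq_existsb => b; apply/forall_inP/subsetP => [can_b x | sub_b x].
  by rewrite !inE; apply: can_b.
by move=> xb; have := sub_b x; rewrite !inE; apply.
Qed.

Lemma halfcubes_true f i :
  halfcube i true \subset true_set f -> halfcube i false \subset true_set f -> f = const_true.
Proof.
move=> /subsetP sub_t /subsetP sub_f; apply/ffunP => x; rewrite ffunE.
by case: (boolP (x i)) => [xi | /negbTE xi]; [move: (sub_t x) | move: (sub_f x)];
  rewrite !inE xi => /(_ isT).
Qed.

Definition canalizing_choices f (U : {set 'I_n}) :=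
  pfamily false U (fun i => [pred b | halfcube i b \subset true_set f]).

Lemma in_canalizing_choices f U (s : {ffun 'I_n -> bool}) :
  (s \in canalizing_choices f U) =
  (s \in pffun_on false U predT) && (union_halfcubes U s \subset true_set f).
Proof.
apply/pfamilyP/andP => [[supp sub_halfcubes] | [/pfamilyP [supp _] sub]].
  split; first by apply/pfamilyP.
  by apply/bigcupsP => i /sub_halfcubes.
by split=> // i iU; apply: subset_trans sub; apply: (bigcup_sup i).
Qed.

Lemma card_canalizing_choices f U :
  #|canalizing_choices f U| = ((U \subset pos_vars f) + (f == const_true) * (2 ^ #|U| - 1))%N.
Proof.
rewrite card_pfamily foldrE big_map big_enum /=.
have [-> | not_true] := eqVneq f const_true.
  have all_sub i b : halfcube i b \subset true_set const_true.
    by apply/subsetP => x _; rewrite inE ffunE.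
  have -> : U \subset pos_vars const_true.
    by apply/subsetP => i _; rewrite inE pos_can_varE; apply/existsP; exists true.
  rewrite (eq_bigr (fun=> 2%N)) => [|i _]; last first.
    by rewrite -card_bool; apply: eq_card => b; rewrite !unfold_in /= all_sub.
  by rewrite big_const iter_muln_1 mul1n addnC subnK // expn_gt0.
rewrite mul0n addn0 (eq_bigr (fun j => nat_of_bool (j \in pos_vars f))) => [|i _]; last first.
  rewrite -sum1_card big_mkcond big_bool [in RHS]inE pos_can_varE existsb_bool !unfold_in /=.
  case: (halfcube i true \subset _) (halfcube i false \subset _) (@halfcubes_true f i)
    => [] [] // /(_ isT isT) eq_f.
  by rewrite eq_f eqxx in not_true.
have [/subsetP sub | /subsetPn [i iU niV]] := boolP (U \subset pos_vars f).
  by rewrite big1 // => i /sub ->.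
by rewrite (bigD1 i) //= (negbTE niV).
Qed.

Lemma sum_weight_canalizing_choices p U :
  \sum_f weight p f * #|canalizing_choices f U|%:R =
  2 ^+ #|U| * p ^+ (2 ^ n - 2 ^ (n - #|U|)).
Proof.
transitivity (\sum_f \sum_(s in canalizing_choices f U) weight p f).
  by apply: eq_bigr => f _; rewrite sumr_const mulr_natr.
rewrite (exchange_big_dep (mem (pffun_on false U predT))) => [|f s _]; last first.
  by rewrite in_canalizing_choices => /andP[].
rewrite (eq_bigr (fun=> p ^+ (2 ^ n - 2 ^ (n - #|U|)))) => [|s supp].
  by rewrite sumr_const card_pffun_on card_bool mulrC -natrX mulr_natr.
rewrite -(card_union_halfcubes U s) -sum_weight_true_on.
by apply: eq_bigl => f; rewrite in_canalizing_choices (supp : s \in pffun_on false U predT).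
Qed.

Lemma sum_weight_pos_vars p U :
  \sum_(f | U \subset pos_vars f) weight p f =
  2 ^+ #|U| * (p ^+ (2 ^ n - 2 ^ (n - #|U|)) - p ^+ (2 ^ n)) + p ^+ (2 ^ n).
Proof.
have split_choices f : weight p f * #|canalizing_choices f U|%:R =
    (if U \subset pos_vars f then weight p f else 0) +
    (if f == const_true then weight p f * (2 ^+ #|U| - 1) else 0).
  rewrite card_canalizing_choices natrD mulrDr natrM natrB ?expn_gt0 // natrX.
  by case: (U \subset pos_vars f); case: (f == const_true) => /=; ring.
have := sum_weight_canalizing_choices p U.
rewrite (eq_bigr _ (fun f _ => split_choices f)) big_split -!big_mkcond /=.
by rewrite big_pred1_eq weight_const_true => /(canRL (addrK _)) ->; ring.
Qed.

Lemma sum_weight_card_pos_vars p k :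
  \sum_(f | #|pos_vars f| == k) weight p f =
  \sum_(r < n.+1) 'C(n, r)%:R * ('C(r, k)%:R * (-1) ^+ (r - k) *
     (2 ^+ r * (p ^+ (2 ^ n - 2 ^ (n - r)) - p ^+ (2 ^ n)) + p ^+ (2 ^ n))).
Proof.
pose c r : R := 'C(r, k)%:R * (-1) ^+ (r - k).
transitivity (\sum_f weight p f * \sum_(U : {set 'I_n} | U \subset pos_vars f) c #|U|).
  rewrite big_mkcond; apply: eq_bigr => f _.
  by rewrite sum_subsets_by_card sum_bin_bin_sign; case: eqP; rewrite ?mulr1 ?mulr0.
transitivity (\sum_(U : {set 'I_n}) c #|U| * \sum_(f | U \subset pos_vars f) weight p f).
  under eq_bigr do rewrite mulr_sumr.
  rewrite (exchange_big_dep xpredT) //=; apply: eq_bigr => U _.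
  by rewrite mulr_sumr; apply: eq_bigr => f _; rewrite mulrC.
under eq_bigr do rewrite sum_weight_pos_vars.
rewrite (eq_bigl (fun U : {set 'I_n} => U \subset [set: 'I_n])) => [|U]; last by rewrite subsetT.
pose h r := c r * (2 ^+ r * (p ^+ (2 ^ n - 2 ^ (n - r)) - p ^+ (2 ^ n)) + p ^+ (2 ^ n)).
by rewrite (sum_subsets_by_card [set: 'I_n] h) cardsT card_ord.
Qed.

Definition literal (i : 'I_n) (s : bool) : boolfun n := [ffun x : input n => x i == s].
Definition literals : {set boolfun n} := [set literal ij.1 ij.2 | ij : 'I_n * bool].

Lemma card_halfcube i b : #|halfcube i b| = (2 ^ n.-1)%N.
Proof.
have -> : n.-1 = (n - #|[set i]|)%N by rewrite cards1 subn1.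
rewrite -(card_agree [set i] (fun=> b)); apply: eq_card => x; rewrite !inE.
by apply/idP/forall_inP => [/eqP xi j /set1P -> | agree]; [rewrite xi | apply: agree; rewrite inE].
Qed.

Lemma weight_literal p i s :
  weight p (literal i s) = p ^+ (2 ^ n.-1) * (1 - p) ^+ (2 ^ n.-1).
Proof.
rewrite weightE.
have -> : [set x | literal i s x] = halfcube i s by apply/setP => x; rewrite !inE ffunE.
have -> : [set x | ~~ literal i s x] = halfcube i (~~ s).
  by apply/setP => x; rewrite !inE ffunE; case: (x i); case: s.
by rewrite !card_halfcube.
Qed.

Lemma pos_vars_literal i s : pos_vars (literal i s) = [set i].
Proof.
apply/setP => j; rewrite !inE; apply/idP/eqP => [/existsP [t /forallP can_t] | ->].
  apply/eqP/contraT => ne_ji; pose x : input n := [ffun l => if l == j then t else ~~ s].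
  have := implyP (can_t x); rewrite !ffunE !eqxx (eq_sym i j) (negbTE ne_ji) => /(_ isT).
  by case: (s).
by apply/existsP; exists s; apply/forallP => x; rewrite ffunE; apply/implyP.
Qed.

Lemma literal_inj : injective (fun ij : 'I_n * bool => literal ij.1 ij.2).
Proof.
move=> [i s] [j t] /= eq_lit.
have eq_ij : i = j by apply/set1_inj; rewrite -(pos_vars_literal i s) eq_lit pos_vars_literal.
subst j; have := congr1 (fun g : boolfun n => g [ffun=> s]) eq_lit.
by rewrite /= !ffunE eqxx => /esym /eqP ->.
Qed.

Lemma pos_neg_can_var_literal f (i j : 'I_n) (s t : bool) :
  [forall x : input n, (x i == s) ==> f x] ->
  [forall x : input n, (x j == t) ==> ~~ f x] -> f = literal i s.
Proof.
move=> /forallP pos /forallP neg.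
have eq_ji : j = i.
  apply/eqP/contraT => ne_ji; pose x : input n := [ffun l => if l == i then s else t].
  have := implyP (neg x); have := implyP (pos x).
  by rewrite !ffunE !eqxx (negbTE ne_ji) !eqxx => -> // /(_ isT).
subst j; have eq_t : t = ~~ s.
  case: (eqVneq t s) => [eq_ts | ]; last by case: (s); case: (t).
  have := implyP (neg [ffun=> s]); have := implyP (pos [ffun=> s]).
  by rewrite !ffunE eq_ts !eqxx => -> // /(_ isT).
apply/ffunP => x; rewrite ffunE; case: (boolP (x i == s)) => [/(implyP (pos x)) -> // | xi].
by apply/negbTE/(implyP (neg x)); rewrite eq_t; move: xi; case: (x i); case: (s).
Qed.

Lemma pos_neg_canE f : pos_can f && neg_can f = (f \in literals).
Proof.
apply/andP/imsetP => [[/existsP [i /existsP [s pos]] /existsP [j /existsP [t neg]]] |].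
  by exists (i, s); rewrite // (pos_neg_can_var_literal pos neg).
move=> [[i s] _ ->]; split; apply/existsP; exists i; apply/existsP.
  by exists s; apply/forallP => x; rewrite ffunE; apply/implyP.
by exists (~~ s); apply/forallP => x; rewrite ffunE; apply/implyP => /eqP ->; case: s.
Qed.

Lemma pos_canE f : pos_can f = (0 < #|pos_vars f|)%N.
Proof.
by rewrite card_gt0; apply/existsP/set0Pn => -[i can_i]; exists i; rewrite ?inE in can_i *.
Qed.

Lemma sum_weight_pos_neg_can p k : (0 < k)%N ->
  \sum_(f | (#|pos_vars f| == k) && neg_can f) weight p f =
  (k == 1)%:R * (2 * n%:R * (p ^+ (2 ^ n.-1) * (1 - p) ^+ (2 ^ n.-1))).
Proof.
move=> k_gt0; rewrite (eq_bigl (fun f => (k == 1)%N && (f \in literals))) => [|f]; last first.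
  case: (boolP (f \in literals)) => [lit_f | not_lit]; last first.
    rewrite andbF; apply: contraNF not_lit => /andP [/eqP card_k neg].
    by rewrite -pos_neg_canE pos_canE card_k k_gt0.
  move: (lit_f); rewrite -pos_neg_canE => /andP [_ ->].
  by case/imsetP: lit_f => -[i s] _ ->; rewrite pos_vars_literal cards1 eq_sym andbT.
have [_ | _] := eqVneq k 1%N; last by rewrite big_pred0 // mul0r.
rewrite big_imset => [|ij ij' _ _]; last exact: literal_inj.
rewrite (eq_bigr (fun=> p ^+ (2 ^ n.-1) * (1 - p) ^+ (2 ^ n.-1))) => [|ij _]; last first.
  exact: weight_literal.
by rewrite sumr_const card_prod card_ord card_bool -[LHS]mulr_natl natrM /=; ring.
Qed.

Lemma Prp_PCE_split p k : (0 < k)%N ->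
  Prp p (PCE n k) = \sum_(f | #|pos_vars f| == k) weight p f -
    (k == 1)%:R * (2 * n%:R * (p ^+ (2 ^ n.-1) * (1 - p) ^+ (2 ^ n.-1))).
Proof.
move=> k_gt0; rewrite (bigID (@neg_can n)) /= -sum_weight_pos_neg_can //.
rewrite [X in X - _]addrC addrK PrpE.
apply: eq_bigl => f; rewrite inE pos_canE -/(pos_vars f).
by case: eqP => [-> | _]; rewrite ?k_gt0 ?andbT ?andbF.
Qed.

Definition negf f : boolfun n := [ffun x => ~~ f x].

Lemma Prp_NCE p k : Prp p (NCE n k) = Prp (1 - p) (PCE n k).
Proof.
have negfK : involutive negf by move=> f; apply/ffunP => x; rewrite !ffunE negbK.
have pos_negf f i : pos_can_var (negf f) i = neg_can_var f i.
  by apply: eq_existsb => s; apply: eq_forallb => x; rewrite ffunE.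
have neg_negf f i : neg_can_var (negf f) i = pos_can_var f i.
  by apply: eq_existsb => s; apply: eq_forallb => x; rewrite ffunE negbK.
rewrite !PrpE [RHS](reindex_inj (can_inj negfK)) /=; apply: eq_big => [f | f _].
  rewrite !inE /pos_can /neg_can (eq_existsb (pos_negf f)) (eq_existsb (neg_negf f)).
  by rewrite (@eq_finset _ _ _ (pos_negf f)) andbCA.
rewrite !weightE subKr mulrC.
by congr (_ ^+ _ * _ ^+ _); apply: eq_card => x; rewrite !inE ffunE ?negbK.
Qed.

Definition pce_term p k r : R :=
  'C(r, k)%:R * (-1) ^+ (r - k) * 'C(n, r)%:R * 2 ^+ r *
  (p ^+ (2 ^ n - 2 ^ (n - r)) - p ^+ (2 ^ n)).

Lemma Prp_PCE p k : (0 < k)%N ->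
  Prp p (PCE n k) = \sum_(k <= r < n.+1) pce_term p k r + (n == k)%:R * p ^+ (2 ^ n)
    - (k == 1)%:R * (2 * n%:R * (p ^+ (2 ^ n.-1) * (1 - p) ^+ (2 ^ n.-1))).
Proof.
move=> k_gt0; rewrite Prp_PCE_split // sum_weight_card_pos_vars; congr (_ - _).
transitivity (\sum_(r < n.+1) (pce_term p k r +
    p ^+ (2 ^ n) * ('C(n, r)%:R * ('C(r, k)%:R * (-1) ^+ (r - k))))).
  by apply: eq_bigr => r _; rewrite /pce_term; ring.
rewrite big_split /= -mulr_sumr sum_bin_bin_sign mulrC; congr (_ + _).
rewrite big_geq_mkord [LHS](bigID (fun r : 'I_n.+1 => k <= r)%N) /=.
rewrite [X in _ + X]big1 ?addr0 // => r; rewrite -ltnNge => lt_rk.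
by rewrite /pce_term bin_small ?mul0r.
Qed.

Lemma Prp_PCE_mid p k : (1 < k)%N -> (k < n)%N ->
  Prp p (PCE n k) = \sum_(k <= r < n.+1) pce_term p k r.
Proof.
move=> lt1k ltkn; rewrite Prp_PCE ?(ltn_trans _ lt1k) //.
by rewrite (gtn_eqF ltkn) (gtn_eqF lt1k) !mul0r addr0 subr0.
Qed.

Lemma Prp_PCE_full p : (1 < n)%N ->
  Prp p (PCE n n) = 2 ^+ n * (p ^+ (2 ^ n - 1) - p ^+ (2 ^ n)) + p ^+ (2 ^ n).
Proof.
move=> lt1n; rewrite Prp_PCE ?(ltnW lt1n) // eqxx (gtn_eqF lt1n) mul0r subr0 mul1r.
by rewrite big_nat1 /pce_term binn subnn expn0 expr0 !mulr1 mul1r.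
Qed.

Lemma Prp_PCE_one p : (1 < n)%N ->
  Prp p (PCE n 1) =
    2 * n%:R * (p ^+ (2 ^ n.-1) - p ^+ (2 ^ n) - p ^+ (2 ^ n.-1) * (1 - p) ^+ (2 ^ n.-1))
    + \sum_(2 <= r < n.+1) r%:R * (-1) ^+ (r - 1) * 'C(n, r)%:R * 2 ^+ r *
        (p ^+ (2 ^ n - 2 ^ (n - r)) - p ^+ (2 ^ n)).
Proof.
move=> lt1n; have lt1Sn : (1 < n.+1)%N by rewrite ltnS ltnW.
rewrite Prp_PCE // eqxx (gtn_eqF lt1n) mul0r addr0 mul1r (big_ltn lt1Sn).
rewrite /pce_term binn bin1 subnn expr0 mulr1 mul1r.
have -> : (2 ^ n - 2 ^ (n - 1) = 2 ^ n.-1)%N.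
  by case: n lt1n => // m _; rewrite subn1 expnS mul2n -addnn addnK.
under eq_big_nat => r _ do rewrite bin1.
by ring.
Qed.

End Weights.

Theorem mainTheorem7 (R : realFieldType) (n : nat) (p : R) :
  (1 <= n)%N -> 0 <= p -> p <= 1 ->
  (* (i) *)
  (forall k : nat, (1 < k)%N -> (k < n)%N ->
     Prp p (PCE n k) =
       \sum_(k <= r < n.+1)
          ('C(r, k))%:R * (-1) ^+ (r - k) * ('C(n, r))%:R * 2 ^+ r *
          (p ^+ (2 ^ n - 2 ^ (n - r)) - p ^+ (2 ^ n))
     /\
     Prp p (NCE n k) =
       \sum_(k <= r < n.+1)
          ('C(r, k))%:R * (-1) ^+ (r - k) * ('C(n, r))%:R * 2 ^+ r *
          ((1 - p) ^+ (2 ^ n - 2 ^ (n - r)) - (1 - p) ^+ (2 ^ n)))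
  /\
  (* (ii) *)
  ((1 < n)%N ->
     Prp p (PCE n n) =
       2 ^+ n * (p ^+ (2 ^ n - 1) - p ^+ (2 ^ n)) + p ^+ (2 ^ n)
     /\
     Prp p (NCE n n) =
       2 ^+ n * ((1 - p) ^+ (2 ^ n - 1) - (1 - p) ^+ (2 ^ n)) + (1 - p) ^+ (2 ^ n))
  /\
  (* (iii) *)
  ((1 < n)%N ->
     Prp p (PCE n 1) =
       2 * n%:R * (p ^+ (2 ^ n.-1) - p ^+ (2 ^ n)
                   - p ^+ (2 ^ n.-1) * (1 - p) ^+ (2 ^ n.-1))
       + \sum_(2 <= r < n.+1)
           r%:R * (-1) ^+ (r - 1) * ('C(n, r))%:R * 2 ^+ r *
           (p ^+ (2 ^ n - 2 ^ (n - r)) - p ^+ (2 ^ n))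
     /\
     Prp p (NCE n 1) =
       2 * n%:R * ((1 - p) ^+ (2 ^ n.-1) - (1 - p) ^+ (2 ^ n)
                   - p ^+ (2 ^ n.-1) * (1 - p) ^+ (2 ^ n.-1))
       + \sum_(2 <= r < n.+1)
           r%:R * (-1) ^+ (r - 1) * ('C(n, r))%:R * 2 ^+ r *
           ((1 - p) ^+ (2 ^ n - 2 ^ (n - r)) - (1 - p) ^+ (2 ^ n))).
Proof.
move=> _ _ _; split; [|split] => [k lt1k ltkn | lt1n | lt1n]; split.
- exact: Prp_PCE_mid.
- by rewrite Prp_NCE Prp_PCE_mid.
- exact: Prp_PCE_full.
- by rewrite Prp_NCE Prp_PCE_full.
- exact: Prp_PCE_one.
- by rewrite Prp_NCE Prp_PCE_one // subKr [p ^+ _ * _]mulrC.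
Qed.
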